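(* Let $\mathbf v\in\mathbb R^{n\times m}_{<0}$ and $\mathbf b\in\mathbb R^n_{<0}$. The number of faces of the Pareto frontier of $\mathcal U(\mathbf v)$ and the number of competitive utility profiles $|\mathrm{CU}(\mathbf v,\mathbf b)|$ are both at most $(2m+1)^{n(n-1)/2}$.
   Context: Setup: agents $[n]$, chores $[m]$, allocations $\mathbf z\in\mathbb R^{n\times m}_{\ge0}$ with column sums $1$, $u_i(\mathbf z_i)=\sum_jv_{i,j}z_{i,j}$, $\mathcal U(\mathbf v)=\{\mathbf u(\mathbf z)\}$. A face of the Pareto frontier is a set $\arg\max_{\mathbf u\in\mathcal U(\mathbf v)}\langle\tau,\mathbf u\rangle$ for some $\tau\in\mathbb R^n_{>0}$. Competitive allocation for budgets $\mathbf b$: there exist prices $\mathbf p\in\mathbb R^m_{<0}$ such that each $\mathbf z_i$ maximizes $u_i$ over bundles $\mathbf x\in\mathbb R^m_{\ge0}$ with $\sum_jp_jx_j\le b_i$; $\mathrm{CU}(\mathbf v,\mathbf b)$ is the set of utility profiles of competitive allocations. *)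

From HB Require Import structures.
From mathcomp Require Import all_boot all_order all_algebra.
Set Implicit Arguments. Unset Strict Implicit. Unset Printing Implicit Defensive.
Import Order.TTheory GRing.Theory Num.Theory.
Local Open Scope ring_scope.

Section Chores.
Variables (R : realFieldType) (n m : nat).

(* z : allocation matrix, z i j = fraction of chore j given to agent i *)
Definition is_alloc (z : 'M[R]_(n, m)) : Prop :=
  (forall i j, 0 <= z i j) /\ (forall j, \sum_(i < n) z i j = 1).

Definition util_bundle (v : 'M[R]_(n, m)) (i : 'I_n) (x : 'rV[R]_m) : R :=
  \sum_(j < m) v i j * x ord0 j.

Definition util (v : 'M[R]_(n, m)) (z : 'M[R]_(n, m)) : 'rV[R]_n :=
  \row_(i < n) \sum_(j < m) v i j * z i j.

Definition Uset (v : 'M[R]_(n, m)) (u : 'rV[R]_n) : Prop :=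
  exists z, is_alloc z /\ u = util v z.

Definition dotv (t u : 'rV[R]_n) : R := \sum_(i < n) t ord0 i * u ord0 i.

Definition face_of (v : 'M[R]_(n, m)) (tau : 'rV[R]_n) (u : 'rV[R]_n) : Prop :=
  Uset v u /\ forall u', Uset v u' -> dotv tau u' <= dotv tau u.

(* a face of the Pareto frontier: face_of v tau for some strictly positive tau *)
Definition pos_vec (tau : 'rV[R]_n) : Prop := forall i, 0 < tau ord0 i.

Definition competitive (v : 'M[R]_(n, m)) (b : 'rV[R]_n) (z : 'M[R]_(n, m)) : Prop :=
  is_alloc z /\
  exists p : 'rV[R]_m, (forall j, p ord0 j < 0) /\
    forall i : 'I_n,
      (forall j, 0 <= z i j) /\
      \sum_(j < m) p ord0 j * z i j <= b ord0 i /\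
      (forall x : 'rV[R]_m, (forall j, 0 <= x ord0 j) ->
          \sum_(j < m) p ord0 j * x ord0 j <= b ord0 i ->
          util_bundle v i x <= \sum_(j < m) v i j * z i j).

Definition CU (v : 'M[R]_(n, m)) (b : 'rV[R]_n) (u : 'rV[R]_n) : Prop :=
  exists z, competitive v b z /\ u = util v z.

End Chores.

(* Section Faces: for weights tau > 0 an allocation maximizes <tau, u(z)> iff
   it is greedy, i.e. every chore j goes only to agents maximizing tau_i v_ij
   ([faceP]); so a face depends only on the comparisons of the tau_i v_ij.
   Section ComparisonPatterns: for agents a < b and v < 0 these comparisons
   are those of tau_a/tau_b with the ratios v_bj/v_aj, all encoded by one
   number in [0, 2m] (strictly-below count plus weakly-below count).  The
   resulting pattern maps the n(n-1)/2 pairs to 'I_(2m+1), giving at most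
   (2m+1)^(n(n-1)/2) faces.
   Section Market: a competitive allocation is greedy for tau_i = 1/alpha_i
   (alpha_i = agent i's maximum bang-per-buck), with tau_i u_i = b_i; a
   sum-of-squares argument shows a face holds at most one profile admitting
   such budget-normalized weights, so each face contributes at most one
   competitive profile. *)
From HB Require Import structures.
From mathcomp Require Import all_boot all_order all_algebra.
From mathcomp Require Import ring lra.
From Stdlib Require ClassicalEpsilon.
Import Order.TTheory GRing.Theory Num.Theory.
Set Implicit Arguments. Unset Strict Implicit. Unset Printing Implicit Defensive.
Local Open Scope ring_scope.

Lemma sum_delta (R : realFieldType) p (F : 'I_p -> R) j :
  \sum_(b < p) F b * (b == j)%:R = F j.
Proof.
rewrite (bigD1 j) //= eqxx mulr1 big1 ?addr0 // => b /negbTE ->; by rewrite mulr0.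
Qed.

Section Faces.
Variables (R : realFieldType) (n m : nat) (v : 'M[R]_(n, m)).

Definition welfare (tau : 'rV[R]_n) (z : 'M[R]_(n, m)) : R :=
  \sum_(i < n) \sum_(j < m) tau ord0 i * v i j * z i j.

Lemma dotv_util tau z : dotv tau (util v z) = welfare tau z.
Proof.
rewrite /dotv /welfare; apply: eq_bigr => i _; rewrite mxE mulr_sumr.
by apply: eq_bigr => j _; rewrite mulrA.
Qed.

Definition greedy (tau : 'rV[R]_n) (z : 'M[R]_(n, m)) : Prop :=
  forall i j, 0 < z i j -> forall k, tau ord0 k * v k j <= tau ord0 i * v i j.

(* Greedy allocations maximize the weighted welfare, chore by chore. *)
Lemma greedy_welfare_max tau z z' :
  is_alloc z -> is_alloc z' -> greedy tau z -> welfare tau z' <= welfare tau z.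
Proof.
move=> [z0 z1] [z'0 z'1] hgreedy.
rewrite /welfare exchange_big [X in _ <= X]exchange_big /=.
apply: ler_sum => j _.
have -> : \sum_(k < n) tau ord0 k * v k j * z' k j =
   \sum_(k < n) \sum_(i < n) z' k j * z i j * (tau ord0 k * v k j).
  apply: eq_bigr => k _; rewrite -mulr_suml -mulr_sumr z1 mulr1.
  by rewrite mulrC.
have -> : \sum_(i < n) tau ord0 i * v i j * z i j =
   \sum_(k < n) \sum_(i < n) z' k j * z i j * (tau ord0 i * v i j).
  rewrite exchange_big /=; apply: eq_bigr => i _.
  by rewrite -mulr_suml -mulr_suml z'1 mul1r mulrC.
apply: ler_sum => k _; apply: ler_sum => i _.
have := z0 i j; rewrite le_eqVlt => /orP [/eqP <-|hz]; first by rewrite !mulr0 !mul0r.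
apply: ler_wpM2l; first by apply: mulr_ge0; [apply: z'0|apply: ltW].
exact: hgreedy.
Qed.

Definition transfer (z : 'M[R]_(n, m)) (i k : 'I_n) (j : 'I_m) : 'M[R]_(n, m) :=
  z + z i j *: \matrix_(a, b) ((b == j)%:R * ((a == k)%:R - (a == i)%:R)).

Lemma transfer_alloc z i k j : i != k -> is_alloc z -> is_alloc (transfer z i k j).
Proof.
move=> hik [z0 z1]; split.
  move=> a b; rewrite !mxE.
  have [->|] := eqVneq b j; last by rewrite mul0r mulr0 addr0.
  rewrite mul1r.
  have [->|hak] := eqVneq a k; first by rewrite eq_sym (negbTE hik) subr0 mulr1 addr_ge0.
  have [->|hai] := eqVneq a i; first by rewrite sub0r mulrN1 subrr.
  by rewrite subrr mulr0 addr0.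
have sum_ind (x : 'I_n) : \sum_(a < n) (a == x)%:R = 1 :> R.
  by rewrite (bigD1 x) //= eqxx big1 ?addr0 // => a /negbTE ->.
move=> b; under eq_bigr do rewrite !mxE.
rewrite big_split /= z1 -mulr_sumr -mulr_sumr sumrB.
by rewrite !sum_ind subrr mulr0 mulr0 addr0.
Qed.

Lemma welfare_transfer tau z i k j :
  welfare tau (transfer z i k j) =
  welfare tau z + z i j * (tau ord0 k * v k j - tau ord0 i * v i j).
Proof.
set c := z i j; rewrite /welfare.
under eq_bigr do under eq_bigr do rewrite !mxE mulrDr.
under eq_bigr do rewrite big_split /=.
rewrite big_split /=; congr (_ + _).
have row (a : 'I_n) :
    \sum_(b < m) tau ord0 a * v a b * (c * ((b == j)%:R * ((a == k)%:R - (a == i)%:R)))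
    = (tau ord0 a * v a j * c) * (a == k)%:R - (tau ord0 a * v a j * c) * (a == i)%:R.
  transitivity (\sum_(b < m)
      (tau ord0 a * v a b * c * ((a == k)%:R - (a == i)%:R)) * (b == j)%:R).
    by apply: eq_bigr => b _; ring.
  by rewrite (sum_delta (fun b => tau ord0 a * v a b * c * _)) mulrBr.
under eq_bigr do rewrite row.
by rewrite sumrB !(sum_delta (fun a => tau ord0 a * v a j * c)) mulrBr !(mulrC c).
Qed.

(* Conversely a welfare maximizer is greedy: otherwise a transfer improves it. *)
Lemma welfare_max_greedy tau z :
  is_alloc z -> (forall z', is_alloc z' -> welfare tau z' <= welfare tau z) ->
  greedy tau z.
Proof.
move=> az Hmax i j hz k; rewrite leNgt; apply/negP => hlt.
have hik : i != k by apply: contraTneq hlt => ->; rewrite ltxx.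
have := Hmax _ (transfer_alloc j hik az).
rewrite welfare_transfer gerDl.
by rewrite leNgt (mulr_gt0 hz) // subr_gt0.
Qed.

Lemma faceP tau u :
  face_of v tau u <-> exists z, [/\ is_alloc z, u = util v z & greedy tau z].
Proof.
split.
  move=> [[z [az ->]] Hm]; exists z; split => //.
  apply: welfare_max_greedy => // z' az'; rewrite -!dotv_util; apply: Hm; by exists z'.
move=> [z [az -> S]]; split; first by exists z.
move=> u' [z' [az' ->]]; rewrite !dotv_util; exact: greedy_welfare_max.
Qed.

Lemma face_of_same_comparisons (tau tau' : 'rV[R]_n) :
  (forall k i j, (tau ord0 k * v k j <= tau ord0 i * v i j) =
                 (tau' ord0 k * v k j <= tau' ord0 i * v i j)) ->
  forall u, face_of v tau u <-> face_of v tau' u.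
Proof.
move=> H u; rewrite !faceP; split => -[z [az eu S]]; exists z; split => //.
  by move=> i j hz k; rewrite -H; apply: S.
by move=> i j hz k; rewrite H; apply: S.
Qed.

End Faces.

Section ComparisonPatterns.
Variable R : realFieldType.

Definition level m (c : 'I_m -> R) (r : R) : nat :=
  addn #|[pred j | c j < r]| #|[pred j | c j <= r]|.

Lemma level_lt m (c : 'I_m -> R) r : (level c r < 2 * m + 1)%N.
Proof.
rewrite /level addn1 ltnS mul2n -addnn.
by apply: leq_add; apply: leq_trans (max_card _) _; rewrite card_ord.
Qed.

Lemma level_inj m (c : 'I_m -> R) r r' :
  level c r = level c r' ->
  forall j, (c j < r) = (c j < r') /\ (c j <= r) = (c j <= r').
Proof.
wlog hr : r r' / r <= r'.
  move=> W H j; have [h|h] := leP r r'; first exact: W.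
  by have [] := W r' r (ltW h) (esym H) j.
have lt_sub : [pred j | c j < r] \subset [pred j | c j < r'].
  by apply/subsetP => j; rewrite !inE => h; apply: lt_le_trans h hr.
have le_sub : [pred j | c j <= r] \subset [pred j | c j <= r'].
  by apply/subsetP => j; rewrite !inE => h; apply: le_trans h hr.
have [lt_card lt_eq] := subset_leqif_card lt_sub.
have [le_card le_eq] := subset_leqif_card le_sub.
rewrite /level => H.
have lt_same : #|[pred j | c j < r]| = #|[pred j | c j < r']|.
  apply/eqP; rewrite eqn_leq lt_card /= -(leq_add2r #|[pred j | c j <= r]|) H.
  by rewrite leq_add2l.
have le_same : #|[pred j | c j <= r]| = #|[pred j | c j <= r']|.
  by apply/eqP; rewrite -(eqn_add2l #|[pred j | c j < r]|) H lt_same.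
move: lt_eq le_eq; rewrite lt_same le_same !eqxx /=.
move=> /esym/subsetP lt_rev /esym/subsetP le_rev j; split.
  by apply/idP/idP => h; [exact: lt_le_trans h hr | by have := lt_rev j; rewrite !inE; apply].
by apply/idP/idP => h; [exact: le_trans h hr | by have := le_rev j; rewrite !inE; apply].
Qed.

Lemma cmp_ratio (ti tk vi vk : R) :
  0 < ti -> 0 < tk -> vi < 0 ->
  ((ti * vi <= tk * vk) = (vk / vi <= ti / tk)) /\
  ((ti * vi < tk * vk) = (vk / vi < ti / tk)).
Proof.
move=> hti htk hvi.
have e1 : ti * vi = (ti / tk) * vi * tk by rewrite mulrAC divfK // gt_eqF.
have e2 : vk = (vk / vi) * vi by rewrite divfK // lt_eqF.
rewrite e1 [X in tk * X]e2 (mulrC tk) ler_pM2r // ltr_pM2r // ler_nM2r // ltr_nM2r //.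
Qed.

(* Unordered pairs of agents, represented as increasing pairs (a, b). *)
Definition agent_pair n := {t : 2.-tuple 'I_n | sorted ltn [seq val i | i <- t]}.

Lemma card_agent_pair n : #|{: agent_pair n}| = ((n * (n - 1)) %/ 2)%N.
Proof.
rewrite card_sig divn2 subn1 -bin2 -(card_ltn_sorted_tuples 2 n) cardsE.
by apply: eq_card => t; rewrite !inE.
Qed.

Definition pattern n m (v : 'M[R]_(n, m)) (tau : 'rV[R]_n)
  : {ffun agent_pair n -> 'I_(2 * m).+1} :=
  [ffun t : agent_pair n =>
    inord (level (fun j => v (tnth (val t) 1) j / v (tnth (val t) 0) j)
                 (tau ord0 (tnth (val t) 0) / tau ord0 (tnth (val t) 1)))].

Lemma pattern_comparisons n m (v : 'M[R]_(n, m)) (tau tau' : 'rV[R]_n) :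
  (forall i j, v i j < 0) -> pos_vec tau -> pos_vec tau' ->
  pattern v tau = pattern v tau' ->
  forall k i j, (tau ord0 k * v k j <= tau ord0 i * v i j) =
                (tau' ord0 k * v k j <= tau' ord0 i * v i j).
Proof.
move=> hv pt pt' hpat k i j.
have same_level (a b : 'I_n) : (a < b)%N ->
    level (fun j => v b j / v a j) (tau ord0 a / tau ord0 b) =
    level (fun j => v b j / v a j) (tau' ord0 a / tau' ord0 b).
  move=> hab; have ht : sorted ltn [seq val x | x <- [tuple a; b]] by rewrite /= hab.
  pose ab : agent_pair n := exist _ [tuple a; b] ht.
  have := congr1 (fun f : {ffun agent_pair n -> 'I_(2 * m).+1} => val (f ab)) hpat.
  by rewrite !ffunE /= !inordK // (leq_trans (level_lt _ _)) // addn1.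
case: (ltngtP k i) => h.
- have [_ e] := level_inj (same_level k i h) j.
  by rewrite (cmp_ratio _ (pt k) (pt i) (hv k j)).1 (cmp_ratio _ (pt' k) (pt' i) (hv k j)).1.
- have [e _] := level_inj (same_level i k h) j.
  by rewrite !leNgt (cmp_ratio _ (pt i) (pt k) (hv i j)).2
    (cmp_ratio _ (pt' i) (pt' k) (hv i j)).2 e.
- by rewrite (val_inj h) !lexx.
Qed.

Lemma pattern_representatives n m (v : 'M[R]_(n, m)) :
  exists taus : seq 'rV[R]_n,
    size taus = ((2 * m + 1) ^ ((n * (n - 1)) %/ 2))%N /\
    forall tau, pos_vec tau ->
      exists2 tau', tau' \in taus & pos_vec tau' /\ pattern v tau' = pattern v tau.
Proof.
pose rep kap := ClassicalEpsilon.epsilon (inhabits 0)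
  (fun t : 'rV[R]_n => pos_vec t /\ pattern v t = kap).
exists [seq rep kap | kap <- enum {: {ffun agent_pair n -> 'I_(2 * m).+1}}]; split.
  by rewrite size_map -cardE card_ffun card_ord card_agent_pair addn1.
move=> tau pt; exists (rep (pattern v tau)).
  by apply/mapP; exists (pattern v tau); rewrite ?mem_enum.
exact: (ClassicalEpsilon.epsilon_spec (inhabits 0)
  (fun t : 'rV[R]_n => pos_vec t /\ pattern v t = pattern v tau)
  (ex_intro _ tau (conj pt erefl))).
Qed.

End ComparisonPatterns.

Section Market.
Variable R : realFieldType.

Lemma negdiv_gt0 (a b : R) : a < 0 -> b < 0 -> 0 < a / b.
Proof.
move=> ha hb; rewrite -mulrNN -invrN; apply: divr_gt0; by rewrite oppr_gt0.
Qed.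

Lemma mbb_slack m (vi p zi : 'I_m -> R) al :
  (forall j, p j < 0) -> (forall j, al <= vi j / p j) -> (forall j, 0 <= zi j) ->
  (forall j, 0 <= (al * p j - vi j) * zi j) /\
  \sum_(j < m) vi j * zi j =
    al * \sum_(j < m) p j * zi j - \sum_(j < m) (al * p j - vi j) * zi j.
Proof.
move=> hp hal hz; split.
  move=> j; apply: mulr_ge0 => //.
  rewrite -[vi j](divfK (ltr0_neq0 (hp j))) -mulrBl.
  by apply: mulr_le0; [rewrite subr_le0 | apply: ltW].
by rewrite mulr_sumr -sumrB; apply: eq_bigr => j _; ring.
Qed.

Lemma mbb_demand m (vi p zi : 'I_m -> R) (bi : R) :
  (forall j, vi j < 0) -> (forall j, p j < 0) -> bi < 0 -> (forall j, 0 <= zi j) ->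
  \sum_(j < m) p j * zi j <= bi ->
  (forall x : 'rV[R]_m, (forall j, 0 <= x ord0 j) -> \sum_(j < m) p j * x ord0 j <= bi ->
      \sum_(j < m) vi j * x ord0 j <= \sum_(j < m) vi j * zi j) ->
  exists al, [/\ 0 < al, (forall j, al <= vi j / p j),
     (forall j, 0 < zi j -> vi j = al * p j) & \sum_(j < m) vi j * zi j = al * bi].
Proof.
move=> hv hp hb hz hcost hopt.
case: m vi p zi hv hp hz hcost hopt => [|m] vi p zi hv hp hz hcost hopt.
  by move: hcost; rewrite big_ord0 leNgt hb.
have [js _ hmin] := @arg_minP _ _ _ ord0 predT (fun j => vi j / p j) isT.
set al := vi js / p js in hmin *.
have hal j : al <= vi j / p j by apply: hmin.
have hpjs : p js != 0 by rewrite lt_eqF.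
(* Spending the whole budget on chore js yields utility al * bi. *)
have best : al * bi <= \sum_j vi j * zi j.
  pose x : 'rV[R]_m.+1 := \row_j ((bi / p js) * (j == js)%:R).
  have cost_x : \sum_j p j * x ord0 j = bi.
    rewrite -[RHS](divfK hpjs) mulrC -(sum_delta (fun j => p j * (bi / p js)) js).
    by apply: eq_bigr => j _; rewrite mxE mulrA.
  have value_x : \sum_j vi j * x ord0 j = al * bi.
    rewrite /al mulrAC -mulrA -(sum_delta (fun j => vi j * (bi / p js)) js).
    by apply: eq_bigr => j _; rewrite mxE mulrA.
  rewrite -value_x; apply: hopt; last by rewrite cost_x.
  by move=> j; rewrite mxE mulr_ge0 ?ler0n ?ltW ?negdiv_gt0.
have [slack_ge0 value_eq] := mbb_slack hp hal hz.
have al_gt0 : 0 < al by apply: negdiv_gt0.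
have cost_bound : al * \sum_j p j * zi j <= al * bi by rewrite ler_pM2l.
have slack_sum_ge0 : 0 <= \sum_j (al * p j - vi j) * zi j by apply: sumr_ge0.
have value : \sum_j vi j * zi j = al * bi.
  by apply/eqP; rewrite eq_le best andbT value_eq; lra.
have slack0 : \sum_j (al * p j - vi j) * zi j = 0.
  by move: value_eq; rewrite value; lra.
exists al; split => // j hzj.
have /eqP := @psumr_eq0P _ _ predT _ (fun j _ => slack_ge0 j) slack0 j isT.
by rewrite mulf_eq0 (gt_eqF hzj) orbF subr_eq0 => /eqP ->.
Qed.

(* A competitive allocation is greedy for the weights tau_i = 1 / al_i, where al_i
   is agent i's maximum bang-per-buck; these weights satisfy tau_i u_i = b_i. *)
Lemma competitive_greedy n m (v : 'M[R]_(n, m)) (b : 'rV[R]_n) z :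
  (forall i j, v i j < 0) -> (forall i, b ord0 i < 0) -> competitive v b z ->
  exists tau, [/\ pos_vec tau, greedy v tau z &
     forall i, tau ord0 i * util v z ord0 i = b ord0 i].
Proof.
move=> hv hb [az [p [hp hdem]]].
have : forall i, exists al, [/\ 0 < al, (forall j, al <= v i j / p ord0 j),
     (forall j, 0 < z i j -> v i j = al * p ord0 j) &
     \sum_(j < m) v i j * z i j = al * b ord0 i].
  move=> i; have [hz [hcost hopt]] := hdem i.
  exact: (mbb_demand (hv i) hp (hb i) hz hcost hopt).
case/fin_all_exists => al hal.
exists (\row_i (al i)^-1); split.
- by move=> i; rewrite mxE invr_gt0; have [] := hal i.
- move=> i j hz k; rewrite !mxE.
  have [ai _ hi _] := hal i; have [ak hk _ _] := hal k.
  rewrite (hi j hz) mulKf ?gt_eqF // mulrC ler_pdivrMr //.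
  rewrite -[X in X <= _](divfK (ltr0_neq0 (hp j))) (mulrC (p ord0 j) (al k)).
  by rewrite ler_nM2r.
- by move=> i; have [ai _ _ hu] := hal i; rewrite !mxE hu mulKf ?gt_eqF.
Qed.

Definition budget_point n m (v : 'M[R]_(n, m)) (b t u : 'rV[R]_n) : Prop :=
  exists tau, [/\ pos_vec tau, (forall w, face_of v tau w <-> face_of v t w),
     face_of v tau u & forall i, tau ord0 i * u ord0 i = b ord0 i].

Lemma sos_identity (x y B : R) : 0 < x -> 0 < y ->
  x * (B / y) + y * (B / x) - 2 * B = B * ((x - y) ^+ 2 / (x * y)).
Proof. by move=> hx hy; field; rewrite ?gt_eqF. Qed.

(* Each face carries at most one budget point: with u_i = b_i / tau_i and
   u'_i = b_i / tau'_i, optimality of both on the common face forces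
   sum_i b_i (tau_i - tau'_i)^2 / (tau_i tau'_i) = 0. *)
Lemma budget_point_uniq n m (v : 'M[R]_(n, m)) (b t u u' : 'rV[R]_n) :
  (forall i, b ord0 i < 0) -> budget_point v b t u -> budget_point v b t u' -> u = u'.
Proof.
move=> hb [tau [pt ft fu eu]] [tau' [pt' ft' fu' eu']].
have fu2 : face_of v tau' u by apply/(ft' u)/(ft u).
have fu2' : face_of v tau u' by apply/(ft u')/(ft' u').
have d1 : dotv tau u' = dotv tau u.
  by apply/eqP; rewrite eq_le (fu.2 _ fu2'.1) (fu2'.2 _ fu.1).
have d2 : dotv tau' u = dotv tau' u'.
  by apply/eqP; rewrite eq_le (fu'.2 _ fu2.1) (fu2.2 _ fu'.1).
have Eu i : u ord0 i = b ord0 i / tau ord0 i by rewrite -(eu i) mulrC mulKf ?gt_eqF.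
have Eu' i : u' ord0 i = b ord0 i / tau' ord0 i by rewrite -(eu' i) mulrC mulKf ?gt_eqF.
pose T i := tau ord0 i * (b ord0 i / tau' ord0 i) + tau' ord0 i * (b ord0 i / tau ord0 i)
    - 2 * b ord0 i.
have sumT : \sum_i T i = 0.
  rewrite /T sumrB big_split /=.
  have -> : \sum_i tau ord0 i * (b ord0 i / tau' ord0 i) = dotv tau u'.
    by apply: eq_bigr => i _; rewrite Eu'.
  have -> : \sum_i tau' ord0 i * (b ord0 i / tau ord0 i) = dotv tau' u.
    by apply: eq_bigr => i _; rewrite Eu.
  rewrite d1 d2 /dotv (eq_bigr _ (fun i _ => eu i)) (eq_bigr _ (fun i _ => eu' i)).
  by rewrite -mulr_sumr mulr2n mulrDl mul1r subrr.
have T_le0 i : 0 <= - T i.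
  rewrite /T sos_identity // -mulNr; apply: mulr_ge0; first by rewrite oppr_ge0 ltW.
  by rewrite divr_ge0 ?sqr_ge0 // ltW // mulr_gt0.
apply/rowP => i; rewrite Eu Eu'.
have : - T i = 0.
  by apply: (@psumr_eq0P _ _ predT (fun i => - T i)) => //; rewrite sumrN sumT oppr0.
move/eqP; rewrite /T sos_identity // oppr_eq0 mulf_eq0 (lt_eqF (hb i)) /=.
rewrite mulf_eq0 invr_eq0 (gt_eqF (mulr_gt0 (pt i) (pt' i))) orbF sqrf_eq0 subr_eq0.
by move/eqP ->.
Qed.

End Market.

(* Faces of the Pareto frontier are determined by comparison patterns. *)
Lemma face_count_bound (R : realFieldType) n m (v : 'M[R]_(n, m)) :
  (forall i j, v i j < 0) ->
  exists taus : seq 'rV[R]_n,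
    size taus = ((2 * m + 1) ^ ((n * (n - 1)) %/ 2))%N /\
    forall tau, pos_vec tau ->
      exists2 tau', tau' \in taus & forall u, face_of v tau u <-> face_of v tau' u.
Proof.
move=> hv; have [taus [hsize hrep]] := pattern_representatives v.
exists taus; split => // tau pt; have [tau' tau'_in [pt' hpat]] := hrep tau pt.
exists tau' => //.
by apply: face_of_same_comparisons; apply: pattern_comparisons; rewrite ?hpat.
Qed.

(* Every competitive profile is the unique budget point of some listed face. *)
Lemma cu_count_bound (R : realFieldType) n m (v : 'M[R]_(n, m)) (b : 'rV[R]_n) :
  (forall i j, v i j < 0) -> (forall i, b ord0 i < 0) ->
  exists us : seq 'rV[R]_n,
    size us = ((2 * m + 1) ^ ((n * (n - 1)) %/ 2))%N /\
    forall u, CU v b u -> u \in us.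
Proof.
move=> hv hb; have [taus [hsize hrep]] := face_count_bound hv.
pose point t := ClassicalEpsilon.epsilon (inhabits 0) (budget_point v b t).
exists [seq point t | t <- taus]; split; first by rewrite size_map.
move=> _ [z [cz ->]].
have [tau [pt greedy_z normalized]] := competitive_greedy hv hb cz.
have [t t_in same_face] := hrep tau pt.
have on_t : budget_point v b t (util v z).
  exists tau; split => //; apply/faceP; exists z; split => //; by case: cz.
have := ClassicalEpsilon.epsilon_spec (inhabits 0) _ (ex_intro _ _ on_t).
move/(budget_point_uniq hb on_t) ->.
by apply/mapP; exists t.
Qed.

Theorem corollary3 (R : realFieldType) (n m : nat)
    (v : 'M[R]_(n, m)) (b : 'rV[R]_n)
    (hv : forall i j, v i j < 0) (hb : forall i, b ord0 i < 0) :
  (exists taus : seq 'rV[R]_n,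
      (size taus <= (2 * m + 1) ^ ((n * (n - 1)) %/ 2))%N /\
      forall tau, pos_vec tau ->
        exists2 tau', tau' \in taus &
          forall u, face_of v tau u <-> face_of v tau' u) /\
  (exists us : seq 'rV[R]_n,
      (size us <= (2 * m + 1) ^ ((n * (n - 1)) %/ 2))%N /\
      forall u, CU v b u -> u \in us).
Proof.
split.
  have [taus [hsize hrep]] := face_count_bound hv.
  by exists taus; rewrite hsize.
have [us [hsize hcu]] := cu_count_bound hv hb.
by exists us; rewrite hsize.
Qed.
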